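(* Let $\Omega$ be a metrizable separable space, $\mathcal{L}\subset\mathcal{C}_b(\Omega)$ a linear subspace which is a vector lattice, contains the constants and generates the topology, and let $\rho$ be a normalized uniformly regular convex risk measure on $\mathcal{L}$. Let $\rho_1$ be a regular sublinear risk measure on $\mathcal{L}$ with $\rho\le\rho_1$. Then: (i) $c(X)=\rho_1(-|X|)$ defines a capacity on $\mathcal{L}$; (ii) $\rho_1$ has a unique continuous extension to a sublinear risk measure $\overline{\rho_1}$ on $L^1(c)$; (iii) $\rho$ has a unique continuous extension to a normalized convex risk measure $\overline{\rho}$ on $L^1(c)$, majorized by $\overline{\rho_1}$.
   Context: A convex risk measure on $\mathcal{L}$ (resp. on $L^1(c)$) is a map $\rho$ to $\mathbb{R}$ that is monotone ($X\le Y\Rightarrow\rho(X)\ge\rho(Y)$), convex and translation invariant ($\rho(X+a)=\rho(X)-a$, $a\in\mathbb{R}$); normalized means $\rho(0)=0$; sublinear means additionally positively homogeneous. A sublinear risk measure $\rho_1$ on $\mathcal{L}$ is regular if $\rho_1(-X_n)\to0$ for every sequence $X_n\in\mathcal{L}$ decreasing pointwise to $0$. A normalized convex risk measure $\rho$ on $\mathcal{L}$ is uniformly regular if $\sup_{\lambda>0}\rho(\lambda X)/\lambda<\infty$ for all $X$, and for every sequence $X_n\in\mathcal{L}$ decreasing to $0$, $\rho(-\lambda X_n)/\lambda\to0$ uniformly in $\lambda>0$. A capacity on $\mathcal{L}$ is a seminorm $c$ with $c(f)\le c(g)$ whenever $|f|\le|g|$ and $\inf_n c(f_n)=0$ for $f_n\in\mathcal{L}$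 decreasing to $0$; extended to all functions by $c(f)=\sup\{c(\varphi):\varphi\in\mathcal{L},0\le\varphi\le f\}$ for $f\ge0$ l.s.c. and $c(g)=\inf\{c(f):f\text{ l.s.c.},f\ge|g|\}$. $L^1(c)$ is the Banach space obtained as the quotient by $c$-null elements of the $c$-closure of $\mathcal{L}$ in $\{g:c(g)<\infty\}$, ordered by: $X\ge0$ iff some $f_n\in\mathcal{L}$, $f_n\ge0$, satisfy $c(g-f_n)\to0$ for every representative $g$ of $X$. *)

From HB Require Import structures.
From mathcomp Require Import all_boot all_order all_algebra.
From mathcomp Require Import all_classical all_reals all_analysis.
Import Order.TTheory GRing.Theory Num.Theory.
Import numFieldNormedType.Exports.
Set Implicit Arguments. Unset Strict Implicit. Unset Printing Implicit Defensive.
Local Open Scope classical_set_scope.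
Local Open Scope ring_scope.

Definition metrizable (R : realType) (T : topologicalType) : Prop :=
  exists d : T -> T -> R,
    (forall x y, 0 <= d x y) /\ (forall x y, d x y = 0 <-> x = y) /\
    (forall x y, d x y = d y x) /\ (forall x y z, d x z <= d x y + d y z) /\
    (forall (x : T) (A : set T),
        nbhs x A <-> exists2 e : R, 0 < e & [set y | d x y < e] `<=` A).

Definition separable (T : topologicalType) : Prop :=
  exists D : set T, countable D /\ closure D = setT.

Definition bounded_continuous (R : realType) (T : topologicalType)
  (f : T -> R) : Prop :=
  continuous f /\ exists M : R, forall x, `|f x| <= M.

Definition vector_lattice (R : realType) (T : Type) (L : set (T -> R)) : Prop :=
  L (fun _ => 0) /\
  (forall f g, L f -> L g -> L (fun x => f x + g x)) /\
  (forall (a : R) f, L f -> L (fun x => a * f x)) /\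
  (forall f g, L f -> L g -> L (fun x => Num.max (f x) (g x))) /\
  (forall f g, L f -> L g -> L (fun x => Num.min (f x) (g x))).

Definition contains_constants (R : realType) (T : Type) (L : set (T -> R)) :=
  forall a : R, L (fun _ => a).

(* L generates the topology of T: the initial topology of L is finer than
   (hence equal to, as L consists of continuous functions) the topology of T;
   i.e. every open set is a neighbourhood of each of its points in the
   initial topology of L (basic neighbourhoods are finite intersections of
   sets {y | |f_i y - f_i x| < e}, f_i in L). *)
Definition generates_topology (R : realType) (T : topologicalType)
  (L : set (T -> R)) : Prop :=
  forall (A : set T) (x : T), open A -> A x ->
    exists (n : nat) (f : 'I_n -> T -> R) (e : R),
      (forall i, L (f i)) /\ 0 < e /\
      [set y | forall i, `|f i y - f i x| < e] `<=` A.

Definition decr_to0 (R : realType) (T : Type) (X : nat -> T -> R) : Prop :=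
  (forall n x, X n.+1 x <= X n x) /\
  (forall x, (fun n => X n x) @ \oo --> (0 : R)).

Definition convex_risk_measure (R : realType) (T : Type) (L : set (T -> R))
  (rho : (T -> R) -> R) : Prop :=
  (forall X Y, L X -> L Y -> (forall x, X x <= Y x) -> rho Y <= rho X) /\
  (forall X Y (l : R), L X -> L Y -> 0 <= l <= 1 ->
     rho (fun x => l * X x + (1 - l) * Y x) <= l * rho X + (1 - l) * rho Y) /\
  (forall X (a : R), L X -> rho (fun x => X x + a) = rho X - a).

Definition normalized (R : realType) (T : Type) (rho : (T -> R) -> R) : Prop :=
  rho (fun _ => 0) = 0.

Definition sublinear_risk_measure (R : realType) (T : Type) (L : set (T -> R))
  (rho : (T -> R) -> R) : Prop :=
  convex_risk_measure L rho /\
  (forall X (l : R), L X -> 0 <= l -> rho (fun x => l * X x) = l * rho X).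

Definition regular (R : realType) (T : Type) (L : set (T -> R))
  (rho1 : (T -> R) -> R) : Prop :=
  forall X : nat -> T -> R, (forall n, L (X n)) -> decr_to0 X ->
    (fun n => rho1 (fun x => - X n x)) @ \oo --> (0 : R).

Definition uniformly_regular (R : realType) (T : Type) (L : set (T -> R))
  (rho : (T -> R) -> R) : Prop :=
  (forall X, L X -> exists M : R,
       forall l : R, 0 < l -> rho (fun x => l * X x) / l <= M) /\
  (forall X : nat -> T -> R, (forall n, L (X n)) -> decr_to0 X ->
     forall e : R, 0 < e -> exists N : nat, forall n, (N <= n)%N ->
       forall l : R, 0 < l -> `|rho (fun x => - (l * X n x)) / l| < e).

(* c is a capacity on L: a monotone seminorm on L with inf_n c(f_n) = 0
   for f_n in L decreasing to 0 (since c >= 0, inf = 0 is the e-form). *)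
Definition capacity (R : realType) (T : Type) (L : set (T -> R))
  (c : (T -> R) -> R) : Prop :=
  (forall f g, L f -> L g -> c (fun x => f x + g x) <= c f + c g) /\
  (forall (a : R) f, L f -> c (fun x => a * f x) = `|a| * c f) /\
  (forall f g, L f -> L g -> (forall x, `|f x| <= `|g x|) -> c f <= c g) /\
  (forall f : nat -> T -> R, (forall n, L (f n)) -> decr_to0 f ->
     forall e : R, 0 < e -> exists n, c (f n) < e).

Definition lsc (R : realType) (T : topologicalType) (f : T -> \bar R) : Prop :=
  forall (x : T) (a : R), (a%:E < f x)%E -> \forall y \near x, (a%:E < f y)%E.

Definition cap_lsc (R : realType) (T : topologicalType) (L : set (T -> R))
  (c : (T -> R) -> R) (f : T -> \bar R) : \bar R :=
  ereal_sup [set (c phi)%:E | phi in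
     [set phi | L phi /\ forall x, 0 <= phi x /\ ((phi x)%:E <= f x)%E]].

Definition cap_ext (R : realType) (T : topologicalType) (L : set (T -> R))
  (c : (T -> R) -> R) (g : T -> R) : \bar R :=
  ereal_inf [set cap_lsc L c f | f in
     [set f | lsc f /\ forall x, (0 <= f x)%E /\ (`|g x|%:E <= f x)%E]].

(* representatives of elements of L^1(c): the c-closure of L inside
   {g | c(g) < oo} *)
Definition L1 (R : realType) (T : topologicalType) (L : set (T -> R))
  (c : (T -> R) -> R) (g : T -> R) : Prop :=
  (cap_ext L c g < +oo)%E /\
  forall e : R, 0 < e ->
    exists2 f, L f & (cap_ext L c (fun x => g x - f x)%R < e%:E)%E.

Definition L1_equiv (R : realType) (T : topologicalType) (L : set (T -> R))
  (c : (T -> R) -> R) (g h : T -> R) : Prop :=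
  cap_ext L c (fun x => g x - h x)%R = 0%E.

Definition L1_nonneg (R : realType) (T : topologicalType) (L : set (T -> R))
  (c : (T -> R) -> R) (g : T -> R) : Prop :=
  exists f : nat -> T -> R,
    (forall n, L (f n) /\ forall x, 0 <= f n x) /\
    forall h, L1 L c h -> L1_equiv L c h g ->
      forall e : R, 0 < e -> exists N : nat, forall n, (N <= n)%N ->
        (cap_ext L c (fun x => h x - f n x)%R < e%:E)%E.

Definition L1_le (R : realType) (T : topologicalType) (L : set (T -> R))
  (c : (T -> R) -> R) (X Y : T -> R) : Prop :=
  L1_nonneg L c (fun x => Y x - X x).

(* A map on L^1(c), given on representatives, must be class-invariant. *)
Definition L1_map (R : realType) (T : topologicalType) (L : set (T -> R))
  (c : (T -> R) -> R) (Phi : (T -> R) -> R) : Prop :=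
  forall g h, L1 L c g -> L1 L c h -> L1_equiv L c g h -> Phi g = Phi h.

Definition L1_continuous (R : realType) (T : topologicalType) (L : set (T -> R))
  (c : (T -> R) -> R) (Phi : (T -> R) -> R) : Prop :=
  forall g, L1 L c g -> forall e : R, 0 < e ->
    exists2 d : R, 0 < d & forall h, L1 L c h ->
      (cap_ext L c (fun x => h x - g x)%R < d%:E)%E -> `|Phi h - Phi g| < e.

Definition L1_convex_risk_measure (R : realType) (T : topologicalType)
  (L : set (T -> R)) (c : (T -> R) -> R) (Phi : (T -> R) -> R) : Prop :=
  L1_map L c Phi /\
  (forall X Y, L1 L c X -> L1 L c Y -> L1_le L c X Y -> Phi Y <= Phi X) /\
  (forall X Y (l : R), L1 L c X -> L1 L c Y -> 0 <= l <= 1 ->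
     Phi (fun x => l * X x + (1 - l) * Y x) <= l * Phi X + (1 - l) * Phi Y) /\
  (forall X (a : R), L1 L c X -> Phi (fun x => X x + a) = Phi X - a).

Definition L1_sublinear_risk_measure (R : realType) (T : topologicalType)
  (L : set (T -> R)) (c : (T -> R) -> R) (Phi : (T -> R) -> R) : Prop :=
  L1_convex_risk_measure L c Phi /\
  (forall X (l : R), L1 L c X -> 0 <= l -> Phi (fun x => l * X x) = l * Phi X).

From HB Require Import structures.
From mathcomp Require Import all_boot all_order all_algebra.
From mathcomp Require Import all_classical all_reals all_analysis.
From mathcomp Require Import ring lra.
Import Order.TTheory GRing.Theory Num.Theory.
Import numFieldNormedType.Exports.
Set Implicit Arguments. Unset Strict Implicit. Unset Printing Implicit Defensive.
Local Open Scope classical_set_scope.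
Local Open Scope ring_scope.

(* Since [rho <= rho1] and [rho] is convex, [rho] (like [rho1]) is 1-Lipschitz
   for the seminorm [c X = rho1 (- |X|)], and regularity of [rho1] makes [c] a
   capacity.  On a metrizable separable space every lsc [F >= 0] is the
   pointwise supremum of a nondecreasing sequence in [L] (built from bump
   functions, which exist because [L] generates the topology); along
   [phi - min phi (A_n + B_n)] regularity then gives Daniell's subadditivity of
   the outer capacity.  So [c] extends to a seminorm on [L^1(c)], and each
   [c]-Lipschitz risk measure on [L] extends uniquely by continuity, as
   [sup {r f - e | c (g - f) < e}]; monotonicity, convexity, translation
   invariance and homogeneity pass to the extension by approximation. *)

Section VectorLattice.
Variables (R : realType) (T : Type) (L : set (T -> R)).
Hypothesis VL : vector_lattice L.

Lemma vlat0 : L (fun _ => 0). Proof. by case: VL. Qed.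

Lemma vlatD f g : L f -> L g -> L (fun x => f x + g x).
Proof. by case: VL => _ [+ _]; apply. Qed.

Lemma vlatZ a f : L f -> L (fun x => a * f x).
Proof. by case: VL => _ [_ [+ _]]; apply. Qed.

Lemma vlat_max f g : L f -> L g -> L (fun x => Num.max (f x) (g x)).
Proof. by case: VL => _ [_ [_ [+ _]]]; apply. Qed.

Lemma vlat_min f g : L f -> L g -> L (fun x => Num.min (f x) (g x)).
Proof. by case: VL => _ [_ [_ [_ +]]]; apply. Qed.

Lemma vlatN f : L f -> L (fun x => - f x).
Proof. by move=> /(vlatZ (-1)); under eq_fun do rewrite mulN1r. Qed.

Lemma vlatB f g : L f -> L g -> L (fun x => f x - g x).
Proof. by move=> Lf /vlatN; apply: vlatD. Qed.

Lemma vlat_norm f : L f -> L (fun x => `|f x|).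
Proof.
move=> Lf; have := vlat_max Lf (vlatN Lf).
by under eq_fun do rewrite maxrN.
Qed.

Lemma vlatNnorm f : L f -> L (fun x => - `|f x|).
Proof. by move=> /vlat_norm /vlatN. Qed.

Lemma vlat_bigmax (I : Type) (s : seq I) (h : I -> T -> R) :
  (forall i, L (h i)) -> L (fun x => \big[Num.max/0]_(i <- s) h i x).
Proof.
move=> Lh; elim: s => [|i s IH].
  by under eq_fun do rewrite big_nil; exact: vlat0.
by under eq_fun do rewrite big_cons; exact: vlat_max.
Qed.

End VectorLattice.

Lemma decr_to0_ge0 (R : realType) (T : Type) (X : nat -> T -> R) :
  decr_to0 X -> forall n x, 0 <= X n x.
Proof.
move=> [dec cv] n x; have dec_x : nonincreasing_seq (X ^~ x).
  by apply/nonincreasing_seqP => m; exact: dec.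
by have := nonincreasing_cvgn_ge dec_x (cvgP _ (cv x)) n; rewrite (cvg_lim _ (cv x)).
Qed.

Definition risk_capacity (R : realType) (T : Type) (rho1 : (T -> R) -> R)
  (X : T -> R) : R := rho1 (fun x => - `|X x|).

Section ConvexRiskMeasure.
Variables (R : realType) (T : Type) (L : set (T -> R)) (r : (T -> R) -> R).
Hypothesis CR : convex_risk_measure L r.

Lemma crm_mono X Y : L X -> L Y -> (forall x, X x <= Y x) -> r Y <= r X.
Proof. by case: CR => + _; apply. Qed.

Lemma crm_convex X Y l : L X -> L Y -> 0 <= l <= 1 ->
  r (fun x => l * X x + (1 - l) * Y x) <= l * r X + (1 - l) * r Y.
Proof. by case: CR => _ [+ _]; apply. Qed.

Lemma crm_transl X a : L X -> r (fun x => X x + a) = r X - a.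
Proof. by case: CR => _ [_ +]; apply. Qed.

End ConvexRiskMeasure.

Section SublinearRiskMeasure.
Variables (R : realType) (T : Type) (L : set (T -> R)) (rho1 : (T -> R) -> R).
Hypothesis VL : vector_lattice L.
Hypothesis SL : sublinear_risk_measure L rho1.
Hypothesis RG : regular L rho1.
Let c := risk_capacity rho1.

Lemma srm_homo X l : L X -> 0 <= l -> rho1 (fun x => l * X x) = l * rho1 X.
Proof. by case: SL => _; apply. Qed.

Lemma srm0 : rho1 (fun _ => 0) = 0.
Proof.
have := srm_homo (l := 2) (vlat0 VL) (ler0n _ 2).
rewrite [X in rho1 X](_ : _ = fun _ => 0); last by apply/funext => x; rewrite mulr0.
lra.
Qed.

Lemma srmD X Y : L X -> L Y -> rho1 (fun x => X x + Y x) <= rho1 X + rho1 Y.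
Proof.
move=> LX LY; have h2 : 0 <= (2^-1 : R) <= 1.
  by rewrite invr_ge0 ler0n /= invf_le1 ?ltr0Sn // ler1n.
have := crm_convex SL.1 (vlatZ VL 2 LX) (vlatZ VL 2 LY) h2.
have half2 (a : R) : 2^-1 * (2 * a) = a by rewrite mulrA mulVf ?mul1r ?pnatr_eq0.
have -> : 1 - 2^-1 = 2^-1 :> R by rewrite {1}(splitr 1) mul1r addrK.
by under eq_fun do rewrite !half2; rewrite !srm_homo ?ler0n ?half2.
Qed.

Lemma capacityD f g : L f -> L g -> c (fun x => f x + g x) <= c f + c g.
Proof.
move=> Lf Lg; have [Lf' Lg'] := (vlatNnorm VL Lf, vlatNnorm VL Lg).
apply: le_trans _ (srmD Lf' Lg'); apply: (crm_mono SL.1 (vlatD VL Lf' Lg')).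
  by apply: (vlatN VL); apply: (vlat_norm VL); apply: (vlatD VL).
by move=> x; rewrite -opprD lerN2 ler_normD.
Qed.

Lemma capacityZ a f : L f -> c (fun x => a * f x) = `|a| * c f.
Proof.
move=> Lf; rewrite /c /risk_capacity -(srm_homo (vlatNnorm VL Lf)) ?normr_ge0 //.
by congr rho1; apply/funext => x; rewrite normrM mulrN.
Qed.

Lemma capacity_mono f g : L f -> L g -> (forall x, `|f x| <= `|g x|) -> c f <= c g.
Proof.
move=> Lf Lg fg; apply: (crm_mono SL.1 (vlatNnorm VL Lg) (vlatNnorm VL Lf)) => x.
by rewrite lerN2.
Qed.

Lemma srm_le_capacity X : L X -> rho1 X <= c X.
Proof.
move=> LX; apply: (crm_mono SL.1 (vlatNnorm VL LX) LX) => x.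
by rewrite lerNl -normrN ler_norm.
Qed.

Lemma risk_capacity_capacity : capacity L c.
Proof.
split; first exact: capacityD.
split; first exact: capacityZ.
split; first exact: capacity_mono.
move=> X LX dX e e0; have [N _ HN] := cvgr_lt _ (RG LX dX) _ e0.
exists N; have := HN N (leqnn N); congr (_ < _); congr rho1; apply/funext => x.
by rewrite ger0_norm // (decr_to0_ge0 dX).
Qed.

Lemma dominated_crm_lipschitz r : convex_risk_measure L r ->
  (forall X, L X -> r X <= rho1 X) ->
  forall X Y, L X -> L Y -> r X <= r Y + c (fun x => X x - Y x).
Proof.
move=> CR r_le X Y LX LY; have LXY := vlatB VL LX LY.
(* [X = t U + (1 - t) Y] with [U = Y + t^-1 (X - Y)]; then let [t] tend to [0]. *)
have step t : 0 < t <= 1 -> r X <= r Y + c (fun x => X x - Y x) + t * (rho1 Y - r Y).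
  move=> /andP[t0 t1]; set U := fun x => Y x + t^-1 * (X x - Y x).
  have LU : L U by apply: (vlatD VL LY); apply: (vlatZ VL).
  have eX : X = fun x => t * U x + (1 - t) * Y x.
    by apply/funext => x; rewrite /U mulrDr mulrA mulfV ?gt_eqF // mul1r; ring.
  rewrite [in r X]eX.
  apply: le_trans (crm_convex CR LU LY (introT andP (conj (ltW t0) t1))) _.
  have : r U <= rho1 Y + t^-1 * c (fun x => X x - Y x).
    apply: le_trans (r_le _ LU) _; apply: le_trans (srmD LY (vlatZ VL t^-1 LXY)) _.
    have t'0 : 0 <= t^-1 by rewrite invr_ge0 ltW.
    by rewrite (srm_homo LXY) // lerD2l ler_wpM2l // srm_le_capacity.
  move=> /(ler_wpM2l (ltW t0)); rewrite mulrDr mulrA mulfV ?gt_eqF // mul1r.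
  by move=> rU; nra.
have K0 : 0 <= rho1 Y - r Y by rewrite subr_ge0 r_le.
apply/ler_addgt0Pr => e e0; set t := Num.min 1 (e / (rho1 Y - r Y + 1)).
have t0 : 0 < t by rewrite lt_min ltr01 divr_gt0 // ltr_wpDl.
have tK : t * (rho1 Y - r Y) <= e.
  apply: le_trans (_ : e / (rho1 Y - r Y + 1) * (rho1 Y - r Y) <= e).
    by rewrite ler_wpM2r // ge_min lexx orbT.
  by rewrite mulrAC ler_pdivrMr ?ltr_wpDl // ler_pM2l // lerDl.
have := step t; rewrite t0 ge_min lexx => /(_ isT); lra.
Qed.

End SublinearRiskMeasure.

Definition minorant (R : realType) (T : Type) (L : set (T -> R))
  (F : T -> \bar R) (phi : T -> R) : Prop :=
  L phi /\ forall x, 0 <= phi x /\ ((phi x)%:E <= F x)%E.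

Lemma continuous_lsc (R : realType) (T : topologicalType) (f : T -> R) :
  continuous f -> lsc (fun x => (f x)%:E).
Proof.
move=> cf x a; rewrite lte_fin => /(cvgr_gt _ (cf x)).
by apply: filterS => y; rewrite lte_fin.
Qed.

Section OuterCapacity.
Variables (R : realType) (T : topologicalType) (L : set (T -> R)).
Variable rho1 : (T -> R) -> R.
Hypothesis VL : vector_lattice L.
Hypothesis SL : sublinear_risk_measure L rho1.
Hypothesis L_continuous : forall f, L f -> continuous f.
Let c := risk_capacity rho1.
Let C := cap_ext L c.

Lemma cap_lsc_ub F phi : minorant L F phi -> ((c phi)%:E <= cap_lsc L c F)%E.
Proof. by move=> phiF; apply: ereal_sup_ubound; exists phi. Qed.

Lemma capacity0 : c (fun _ => 0) = 0.
Proof.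
by rewrite /c /risk_capacity -[RHS](srm0 VL SL); under eq_fun do rewrite normr0 oppr0.
Qed.

Lemma cap_ext_le_lsc g F : lsc F -> (forall x, 0 <= F x /\ `|g x|%:E <= F x)%E ->
  (C g <= cap_lsc L c F)%E.
Proof. by move=> lF gF; apply: ereal_inf_lbound; exists F. Qed.

Lemma cap_ext_lt g M : (C g < M)%E -> exists F, [/\ lsc F,
  (forall x, 0 <= F x /\ `|g x|%:E <= F x)%E & (cap_lsc L c F < M)%E].
Proof. by move/ereal_inf_lt => [_ [F [lF gF] <-] FM]; exists F. Qed.

Lemma cap_ext_le g h : (forall x, `|g x| <= `|h x|) -> (C g <= C h)%E.
Proof.
move=> gh; apply: ereal_inf_le_tmp => _ [F [lF hF] <-]; exists F => //; split => // x.
by have [F0 hx] := hF x; split => //; apply: le_trans hx; rewrite lee_fin.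
Qed.

Lemma cap_ext_eq g h : (forall x, `|g x| = `|h x|) -> C g = C h.
Proof. by move=> gh; apply/le_anti; rewrite !cap_ext_le // => x; rewrite gh. Qed.

Lemma cap_extE f : L f -> C f = (c f)%:E.
Proof.
move=> Lf; apply/le_anti/andP; split.
  apply: le_trans (cap_ext_le_lsc (F := fun x => `|f x|%:E) _ _) _.
  - exact: continuous_lsc (L_continuous (vlat_norm VL Lf)).
  - by move=> x; rewrite lee_fin.
  apply: ge_ereal_sup => _ [phi [Lphi phif] <-]; rewrite lee_fin.
  apply: (capacity_mono VL SL Lphi Lf) => x; have [phi0 /= phifx] := phif x.
  by rewrite ger0_norm // -lee_fin.
apply: le_ereal_inf_tmp => _ [F [lF fF] <-].
have -> : c f = c (fun x => `|f x|).
  by rewrite /c /risk_capacity; congr rho1; apply/funext => x; rewrite normr_id.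
by apply: cap_lsc_ub; split; [exact: vlat_norm | move=> x; case: (fF x)].
Qed.

Lemma cap_ext0 : C (fun _ => 0) = 0%E.
Proof. by rewrite cap_extE ?capacity0 //; exact: vlat0. Qed.

End OuterCapacity.

Section Bump.
Variables (R : realType) (T : topologicalType) (L : set (T -> R)).
Hypothesis VL : vector_lattice L.
Hypothesis CL : contains_constants L.
Hypothesis GT : generates_topology L.

(* [b = a * (1 - m / e)^+], where [m] measures the distance to [x] along the
   finitely many functions of [L] describing a basic neighbourhood of [x]. *)
Lemma minorant_bump (F : T -> \bar R) x (a : R) : lsc F ->
  (forall z, 0 <= F z)%E -> 0 <= a -> (a%:E < F x)%E ->
  exists b, minorant L F b /\ b x = a.
Proof.
move=> lF F0 a0 aFx.
have oF : open [set z | (a%:E < F z)%E] by rewrite openE => z; exact: lF.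
have [n [f [e [Lf [e0 sub]]]]] := GT oF aFx.
pose m : T -> R := fun z => \big[Num.max/0]_(i < n) `|f i z - f i x|.
have Lm : L m.
  by apply: (vlat_bigmax VL) => i; apply: (vlat_norm VL); apply: (vlatB VL (Lf i)).
have m_ge z i : `|f i z - f i x| <= m z by exact: (le_bigmax _ (fun i => `|f i z - f i x|)).
exists (fun z => a * Num.max 0 (1 - e^-1 * m z)); split; first split.
- apply: (vlatZ VL); apply: (vlat_max VL (CL 0)); apply: (vlatB VL (CL 1)).
  exact: (vlatZ VL).
- move=> z; split; first by rewrite mulr_ge0 // le_max lexx.
  have [mz_lt|mz_ge] := ltP (m z) e.
    apply: le_trans (ltW (sub _ (fun i => le_lt_trans (m_ge z i) mz_lt))).
    rewrite lee_fin ler_piMr // ge_max ler01 lerBlDr lerDl.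
    by rewrite mulr_ge0 ?invr_ge0 ?(ltW e0) //; exact: bigmax_ge_id.
  rewrite (_ : Num.max _ _ = 0) ?mulr0 ?F0 //; apply/max_idPl.
  by rewrite subr_le0 ler_pdivlMl // mulr1.
- have -> : m x = 0.
    by apply: (big_ind (fun v => v = 0)) => // [u v -> ->|i _]; rewrite ?maxxx // subrr normr0.
  by rewrite mulr0 subr0 max_r ?ler01 // mulr1.
Qed.

End Bump.

Lemma EFin_lt_dense (R : realType) (b : R) (y : \bar R) :
  (b%:E < y)%E -> exists b' : R, b < b' /\ (b'%:E < y)%E.
Proof.
case: y => [r||] //; last by exists (b + 1); rewrite ltry; split => //; lra.
by rewrite lte_fin => br; exists ((b + r) / 2); rewrite lte_fin; split; lra.
Qed.

Lemma natSinv_lt (R : realType) (e : R) : 0 < e -> exists k : nat, k.+1%:R^-1 < e.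
Proof.
by move=> e0; have [N _ HN] := near_infty_natSinv_lt (PosNum e0); exists N; apply: HN => /=.
Qed.

Lemma grid_point_between (R : realType) (b b' : R) : 0 <= b' -> b < b' ->
  exists j m : nat, b + j.+1%:R^-1 < m%:R / j.+1%:R /\ m%:R / j.+1%:R <= b'.
Proof.
move=> b'0 bb'; have [j jb] : exists j : nat, j.+1%:R^-1 < (b' - b) / 2.
  by apply: natSinv_lt; lra.
set m := Num.truncn (b' * j.+1%:R); exists j, m; set h : R := j.+1%:R^-1.
have {}jb : h < (b' - b) / 2 := jb.
have h0 : 0 < h by rewrite invr_gt0 ltr0Sn.
have b'E : b' = b' * j.+1%:R * h by rewrite -mulrA mulfV ?mulr1 ?pnatr_eq0.
split.
  have : b' < (m%:R + 1) * h.
    by rewrite {1}b'E ltr_pM2r // natr1; exact: truncnS_gt.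
  by rewrite mulrDl mul1r; lra.
by rewrite b'E ler_pM2r // truncn_le mulr_ge0 ?ler0n.
Qed.

Section MetricDensity.
Variables (R : realType) (T : topologicalType) (d : T -> T -> R).
Hypothesis d_sym : forall x y, d x y = d y x.
Hypothesis d_triangle : forall x y z, d x z <= d x y + d y z.
Hypothesis d_nbhs : forall (x : T) (A : set T),
  nbhs x A <-> exists2 e : R, 0 < e & [set y | d x y < e] `<=` A.

Lemma dense_ball_sub (D : set T) z (A : set T) : closure D = setT -> nbhs z A ->
  exists q (k : nat),
    [/\ D q, d q z < k.+1%:R^-1 & [set y | d q y < k.+1%:R^-1] `<=` A].
Proof.
move=> Ddense /d_nbhs [e e0 zeA]; have [k ke] : exists k : nat, k.+1%:R^-1 < e / 2.
  by apply: natSinv_lt; rewrite divr_gt0.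
have : closure D z by rewrite Ddense.
case/(_ [set y | d z y < k.+1%:R^-1]) => [|q [Dq /= zq]].
  by apply/d_nbhs; exists k.+1%:R^-1; rewrite ?invr_gt0.
exists q, k; split => //; first by rewrite d_sym.
move=> y /= qy; apply: zeA; apply: le_lt_trans (d_triangle z q y) _.
by rewrite /= [e]splitr; apply: ltrD; apply: lt_trans ke.
Qed.

End MetricDensity.

Section LscMinorants.
Variables (R : realType) (T : topologicalType) (L : set (T -> R)).
Hypothesis VL : vector_lattice L.
Hypothesis CL : contains_constants L.
Hypothesis GT : generates_topology L.
Hypothesis L_continuous : forall f, L f -> continuous f.
Hypothesis MET : metrizable R T.
Hypothesis SEP : separable T.

(* Countably many minorants suffice: [t = (j, m, i, k)] indexes the level
   [m / (j + 1)] with slack [1 / (j + 1)] on the ball of radius [1 / (k + 1)]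
   around the point of [D] with code [i]. *)
Lemma lsc_countable_minorants F : lsc F -> (forall z, 0 <= F z)%E ->
  exists g : nat -> T -> R, (forall n, minorant L F (g n)) /\
    (forall z b, (b%:E < F z)%E -> exists n, b < g n z).
Proof.
move=> lF F0; have [d [_ [_ [d_sym [d_tri d_nbhs]]]]] := MET.
have [D [cD Ddense]] := SEP; have /countable_injP[code code_inj] := cD.
pose level (t : nat * nat * nat * nat) : R := t.1.1.2%:R / t.1.1.1.+1%:R.
pose slack (t : nat * nat * nat * nat) : R := t.1.1.1.+1%:R^-1.
pose ball (t : nat * nat * nat * nat) :=
  [set y | exists2 q, D q /\ code q = t.1.2 & d q y < t.2.+1%:R^-1].
pose covers t h := minorant L F h /\ ball t `<=` [set y | level t - slack t < h y].
have min0 : minorant L F (fun _ => 0) by split; [exact: vlat0 | move=> z; split].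
have /choice[h hP] : forall t, exists h,
    minorant L F h /\ ((exists h', covers t h') -> covers t h).
  move=> t; case: (pselect (exists h', covers t h')) => [[h' [h'F h'ball]]|nc].
    by exists h'; split => // _; split.
  by exists (fun _ => 0); split => // ch; exfalso; apply: nc.
exists (fun n => if unpickle n is Some t then h t else fun _ => 0); split.
  by move=> n; case: (unpickle n) => [t|] //; case: (hP t).
move=> z b bFz; have [b_lt0|b_ge0] := ltP b 0.
  by exists 0%N; case: (unpickle 0) => [t|]; [case: (hP t) => -[_ /(_ z) []] + _|]; lra.
have [b' [bb' b'Fz]] := EFin_lt_dense bFz.
have [j [m [b_lt b'_ge]]] := grid_point_between (ltW (le_lt_trans b_ge0 bb')) bb'.
set a : R := m%:R / j.+1%:R in b_lt b'_ge.
have aFz : (a%:E < F z)%E by apply: le_lt_trans b'Fz; rewrite lee_fin.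
have [bz [bzF bz_z]] := minorant_bump VL CL GT lF F0 (divr_ge0 (ler0n _ _) (ler0n _ _)) aFz.
have near_z : nbhs z [set y | a - j.+1%:R^-1 < bz y].
  have lt_z : a - j.+1%:R^-1 < bz z by rewrite bz_z ltrBlDr ltrDl invr_gt0 ltr0Sn.
  exact: (@cvgr_gt _ _ _ (nbhs_filter z) _ _ (@L_continuous _ bzF.1 z) _ lt_z).
have [q [k [Dq qz ball_sub]]] := dense_ball_sub d_sym d_tri d_nbhs Ddense near_z.
pose t := (j, m, code q, k).
have ct : covers t (h t).
  apply: (hP t).2; exists bz; split => // y [q' [Dq' /code_inj eq_q] q'y].
  by apply: ball_sub; rewrite /= -eq_q ?inE.
have : a - j.+1%:R^-1 < h t z by apply: ct.2; exists q.
move=> lt_h; exists (pickle t); rewrite pickleK; apply: lt_trans lt_h.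
by rewrite ltrBrDr.
Qed.

Lemma lsc_nondecreasing_minorants F : lsc F -> (forall z, 0 <= F z)%E ->
  exists A : nat -> T -> R, [/\ forall n, minorant L F (A n),
    forall z, nondecreasing_seq (A ^~ z) &
    forall z b, (b%:E < F z)%E -> exists n, b < A n z].
Proof.
move=> lF F0; have [g [gF g_sup]] := lsc_countable_minorants lF F0.
exists (fun n z => \big[Num.max/0]_(i < n.+1) g i z); split.
- move=> n; split; first by apply: (vlat_bigmax VL) => i; case: (gF i).
  move=> z; split; first exact: bigmax_ge_id.
  apply: (big_ind (fun v => v%:E <= F z)%E) => // [u v uF vF|i _].
    by rewrite /= maxEle; case: ifP.
  by case: (gF i) => _ /(_ z) [].
- move=> z; apply/nondecreasing_seqP => n.
  exact: (le_bigmax_ord xpredT (fun i => g i z) (leqnSn n.+1)).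
move=> z b /g_sup[n bg]; exists n; apply: lt_le_trans bg _.
exact: (le_bigmax _ (fun i : 'I_n.+1 => g i z) ord_max).
Qed.

End LscMinorants.

Lemma EFin_lt_splitD (R : realType) (p : R) (u v : \bar R) : (0 <= u)%E -> (0 <= v)%E ->
  (p%:E < u + v)%E -> exists a1 a2 : R, [/\ (a1%:E < u)%E, (a2%:E < v)%E & p < a1 + a2].
Proof.
case: u => [r1||] //; case: v => [r2||] //.
- rewrite !lee_fin -EFinD lte_fin => r10 r20 pr.
  by exists (r1 - (r1 + r2 - p) / 3), (r2 - (r1 + r2 - p) / 3); rewrite !lte_fin; split; lra.
- by move=> r10 _ _; exists (r1 - 1), (p - r1 + 2); rewrite lte_fin ltry; split => //; lra.
- by move=> _ r20 _; exists (p - r2 + 2), (r2 - 1); rewrite lte_fin ltry; split => //; lra.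
- by move=> _ _ _; exists (p + 2), 0; rewrite !ltry; split => //; lra.
Qed.

Lemma lscD (R : realType) (T : topologicalType) (F G : T -> \bar R) :
  lsc F -> lsc G -> (forall x, 0 <= F x)%E -> (forall x, 0 <= G x)%E ->
  lsc (fun x => F x + G x)%E.
Proof.
move=> lF lG F0 G0 x a /(EFin_lt_splitD (F0 x) (G0 x))[a1 [a2 [a1F a2G a12]]].
near=> y; have a1Fy : (a1%:E < F y)%E by near: y; exact: lF.
have a2Gy : (a2%:E < G y)%E by near: y; exact: lG.
by apply: lt_trans (lteD a1Fy a2Gy); rewrite -EFinD lte_fin.
Unshelve. all: by end_near.
Qed.

Lemma decr_to0_min_gap (R : realType) (T : Type) (phi : T -> R) (S : nat -> T -> R) :
  (forall x, nondecreasing_seq (S ^~ x)) ->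
  (forall x b, b < phi x -> exists n, b < S n x) ->
  decr_to0 (fun n x => phi x - Num.min (phi x) (S n x)).
Proof.
move=> S_mono S_sup; split => [n x|x].
  by rewrite lerD2l lerN2 le_min ge_min lexx ge_min S_mono ?leqnSn ?orbT.
apply/cvgrPdist_lt => e e0.
have [N phiS] : exists N, phi x - e < S N x by apply: S_sup; lra.
near=> n; rewrite sub0r normrN ger0_norm ?subr_ge0 ?ge_min ?lexx //.
have SNn : S N x <= S n x by apply: S_mono; near: n; exists N.
by rewrite ltrBlDr -ltrBlDl lt_min; apply/andP; split; lra.
Unshelve. all: by end_near.
Qed.

Lemma ler_add_scaled_gt0P (R : realFieldType) (k x y : R) : 0 < k ->
  (forall d, 0 < d -> x <= y + k * d) -> x <= y.
Proof.
move=> k0 xy; apply/ler_addgt0Pr => e e0.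
by have := xy (e / k) (divr_gt0 e0 k0); rewrite mulrC divfK ?gt_eqF.
Qed.

Lemma eq_dist_scaled_gt0P (R : realFieldType) (k x y : R) : 0 < k ->
  (forall d, 0 < d -> `|x - y| <= k * d) -> x = y.
Proof.
move=> k0 xy; apply/eqP; rewrite -subr_eq0 -normr_le0.
by apply: (ler_add_scaled_gt0P k0) => d /xy; rewrite add0r.
Qed.

(* Each [f] in [L] with [c (g - f) < e] certifies the value [r f - e] for a
   [c]-Lipschitz extension of [r] at [g]. *)
Definition L1_ext (R : realType) (T : topologicalType) (L : set (T -> R))
  (c : (T -> R) -> R) (r : (T -> R) -> R) (g : T -> R) : R :=
  sup [set y | exists f e,
    [/\ L f, (cap_ext L c (fun x => (g x - f x)%R) < e%:E)%E & y = r f - e]].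

Section L1Extension.
Variables (R : realType) (T : topologicalType) (L : set (T -> R)).
Variable rho1 : (T -> R) -> R.
Hypothesis VL : vector_lattice L.
Hypothesis CL : contains_constants L.
Hypothesis GT : generates_topology L.
Hypothesis L_continuous : forall f, L f -> continuous f.
Hypothesis MET : metrizable R T.
Hypothesis SEP : separable T.
Hypothesis SL : sublinear_risk_measure L rho1.
Hypothesis RG : regular L rho1.
Let c := risk_capacity rho1.
Let C := cap_ext L c.

(* Daniell's argument: regularity of [c] along [phi - min(phi, A_n + B_n)]. *)
Lemma cap_lscD F G : lsc F -> lsc G -> (forall x, 0 <= F x)%E -> (forall x, 0 <= G x)%E ->
  (cap_lsc L c (fun x => F x + G x)%E <= cap_lsc L c F + cap_lsc L c G)%E.
Proof.
move=> lF lG F0 G0; apply: ge_ereal_sup => _ [phi [Lphi phiFG] <-].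
have [A [AF A_mono A_sup]] := lsc_nondecreasing_minorants VL CL GT L_continuous MET SEP lF F0.
have [B [BG B_mono B_sup]] := lsc_nondecreasing_minorants VL CL GT L_continuous MET SEP lG G0.
have LAB n : L (fun x => A n x + B n x) by apply: (vlatD VL); [case: (AF n) | case: (BG n)].
have AB_mono x : nondecreasing_seq (fun n => A n x + B n x).
  by move=> m n mn; apply: lerD; [exact: A_mono | exact: B_mono].
have AB_sup x b : b < phi x -> exists n, b < A n x + B n x.
  move=> bphi; have [_ phixFG] := phiFG x.
  have /EFin_lt_splitD[//|//|a1 [a2 [a1F a2G a12]]] : (b%:E < F x + G x)%E.
    by apply: lt_le_trans phixFG; rewrite lte_fin.
  have [[n1 An1] [n2 Bn2]] := (A_sup x a1 a1F, B_sup x a2 a2G).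
  exists (maxn n1 n2).
  have := A_mono x _ _ (leq_maxl n1 n2); have := B_mono x _ _ (leq_maxr n1 n2).
  rewrite /=; lra.
pose psi n x := Num.min (phi x) (A n x + B n x).
have Lpsi n : L (psi n) by apply: (vlat_min VL).
have [_ [_ [_ c_reg]]] := risk_capacity_capacity VL SL RG.
apply/lee_addgt0Pr => e e0.
have [N cN] :=
  c_reg _ (fun n => vlatB VL Lphi (Lpsi n)) (decr_to0_min_gap AB_mono AB_sup) e e0.
have {}cN : c (fun x => phi x - psi N x) < e := cN.
have c_psi : c (psi N) <= c (A N) + c (B N).
  apply: le_trans _ (capacityD VL SL (AF N).1 (BG N).1).
  apply: (capacity_mono VL SL (Lpsi N) (LAB N)).
  move=> x; have [[[A0 _] [B0 _]] [phi0 _]] := ((AF N).2 x, (BG N).2 x, phiFG x).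
  have AB0 : 0 <= A N x + B N x by rewrite addr_ge0.
  by rewrite /psi (ger0_norm AB0) ger0_norm ?ge_min ?lexx ?orbT // le_min phi0 AB0.
have c_phi : c phi <= c (psi N) + c (fun x => phi x - psi N x).
  rewrite {1}(_ : phi = fun x => psi N x + (phi x - psi N x)).
    exact: (capacityD VL SL (Lpsi N) (vlatB VL Lphi (Lpsi N))).
  by apply/funext => x; rewrite addrC subrK.
apply: le_trans (_ : ((c (A N))%:E + (c (B N))%:E + e%:E <= _)%E).
  by rewrite -!EFinD lee_fin; lra.
by rewrite leeD2r // leeD // cap_lsc_ub.
Qed.

Lemma cap_extD_lt u v (a b : R) : (C u < a%:E)%E -> (C v < b%:E)%E ->
  (C (fun x => (u x + v x)%R) < (a + b)%R%:E)%E.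
Proof.
move=> /cap_ext_lt[F [lF uF Fa]] /cap_ext_lt[G [lG vG Gb]].
have F0 x : (0 <= F x)%E by case: (uF x).
have G0 x : (0 <= G x)%E by case: (vG x).
have uvFG x : (0 <= F x + G x)%E /\ (`|u x + v x|%:E <= F x + G x)%E.
  split; first exact: adde_ge0.
  apply: le_trans (leeD (uF x).2 (vG x).2); rewrite -EFinD lee_fin; exact: ler_normD.
apply: le_lt_trans (cap_ext_le_lsc L rho1 (lscD lF lG F0 G0) uvFG) _.
by apply: le_lt_trans (cap_lscD lF lG F0 G0) _; rewrite EFinD; apply: lteD.
Qed.

Lemma cap_ext_sym g h : C (fun x => g x - h x) = C (fun x => h x - g x).
Proof. by apply: (cap_ext_eq L rho1) => x; rewrite distrC. Qed.

Lemma cap_extN g : C (fun x => - g x) = C g.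
Proof. by apply: (cap_ext_eq L rho1) => x; rewrite normrN. Qed.

Lemma cap_ext_fin g : (C g < +oo)%E -> exists a : R, (C g < a%:E)%E.
Proof.
case: (C g) => [r||] // _; last by exists 0; rewrite ltNyr.
by exists (r + 1); rewrite lte_fin ltrDl.
Qed.

Lemma cap_extMn_lt u (a : R) n : (C u < a%:E)%E ->
  (C (fun x => (n.+1%:R * u x)%R) < (n.+1%:R * a)%R%:E)%E.
Proof.
move=> ua; elim: n => [|n IH]; first by under eq_fun do rewrite mul1r; rewrite mul1r.
rewrite -natr1 mulrDl mul1r.
rewrite (_ : (fun x => _) = fun x => (n.+1%:R * u x + u x)%R); last first.
  by apply/funext => x; rewrite -natr1 mulrDl mul1r.
exact: cap_extD_lt.
Qed.

Lemma cap_extZ_lt l u (a : R) : (C u < a%:E)%E ->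
  (C (fun x => (l * u x)%R) < ((Num.truncn `|l|).+1%:R * a)%R%:E)%E.
Proof.
move=> /(cap_extMn_lt (Num.truncn `|l|)); apply: le_lt_trans.
apply: (cap_ext_le L rho1) => x; rewrite !normrM ler_wpM2r // [leRHS]ger0_norm ?ler0n //.
exact/ltW/truncnS_gt.
Qed.

Lemma cap_extZ_small (l e : R) : 0 < e ->
  exists2 d : R, 0 < d & forall u, (C u < d%:E)%E -> (C (fun x => (l * u x)%R) < e%:E)%E.
Proof.
move=> e0; have N0 : 0 < ((Num.truncn `|l|).+1%:R : R) by rewrite ltr0Sn.
exists (e / (Num.truncn `|l|).+1%:R); first by rewrite divr_gt0.
by move=> u /(cap_extZ_lt l); rewrite mulrC divfK ?gt_eqF.
Qed.

Lemma L1_L f : L f -> L1 L c f.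
Proof.
move=> Lf; split; first by rewrite (cap_extE VL SL L_continuous Lf) ltry.
move=> e e0; exists f => //; under eq_fun do rewrite subrr.
by rewrite (cap_ext0 VL SL L_continuous) lte_fin.
Qed.

Lemma L1D g h : L1 L c g -> L1 L c h -> L1 L c (fun x => g x + h x).
Proof.
move=> [/cap_ext_fin[a ga] g_appr] [/cap_ext_fin[b hb] h_appr]; split.
  by apply: lt_trans (cap_extD_lt ga hb) _; rewrite ltry.
move=> e e0; have e2 : 0 < e / 2 by rewrite divr_gt0.
have [[f1 Lf1 gf1] [f2 Lf2 hf2]] := (g_appr _ e2, h_appr _ e2).
exists (fun x => f1 x + f2 x); first exact: (vlatD VL).
rewrite (splitr e) (_ : (fun x => _) = fun x => (g x - f1 x) + (h x - f2 x)).
  exact: cap_extD_lt.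
by apply/funext => x; rewrite opprD addrACA.
Qed.

Lemma L1Z l g : L1 L c g -> L1 L c (fun x => l * g x).
Proof.
move=> [/cap_ext_fin[a ga] g_appr]; split.
  by apply: lt_trans (cap_extZ_lt l ga) _; rewrite ltry.
move=> e e0; have [d d0 Zd] := cap_extZ_small l e0; have [f Lf gf] := g_appr _ d0.
exists (fun x => l * f x); first exact: (vlatZ VL).
by under eq_fun do rewrite -mulrBr; exact: Zd.
Qed.

Lemma L1B g h : L1 L c g -> L1 L c h -> L1 L c (fun x => g x - h x).
Proof.
move=> Lg /(L1Z (-1)) Lh; have := L1D Lg Lh.
by under eq_fun do rewrite mulN1r.
Qed.

Section LipschitzExtension.
Variable r : (T -> R) -> R.
Hypothesis r_lip : forall X Y, L X -> L Y -> r X <= r Y + c (fun x => X x - Y x).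
Let E := L1_ext L c r.

Lemma L1_ext_bounds g f e : L f -> (C (fun x => (g x - f x)%R) < e%:E)%E ->
  r f - e <= E g <= r f + e.
Proof.
move=> Lf gf; rewrite /E /L1_ext; set S := [set y | _].
have ub : ubound S (r f + e).
  move=> _ [f' [e' [Lf' gf' ->]]].
  have : (C (fun x => (f' x - f x)%R) < (e + e')%R%:E)%E.
    rewrite (_ : (fun x => _) = fun x => (g x - f x) + - (g x - f' x)); last first.
      by apply/funext => x; ring.
    by apply: cap_extD_lt; rewrite // cap_extN.
  rewrite /C (cap_extE VL SL L_continuous (vlatB VL Lf' Lf)) lte_fin -/c => ff'.
  by have := r_lip Lf' Lf; lra.
have Sf : S (r f - e) by exists f, e.
apply/andP; split; last by apply: ge_sup => //; exists (r f - e).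
by apply: sup_upper_bound => //; split; [exists (r f - e) | exists (r f + e)].
Qed.

Lemma L1_extE f : L f -> E f = r f.
Proof.
move=> Lf; have near_f e : 0 < e -> r f - e <= E f <= r f + e.
  move=> e0; apply: L1_ext_bounds => //; under eq_fun do rewrite subrr.
  by rewrite /C (cap_ext0 VL SL L_continuous) lte_fin.
by apply/le_anti/andP; split; apply/ler_addgt0Pr => e /near_f /andP[]; lra.
Qed.

Lemma L1_ext_lipschitz g h e : L1 L c g -> (C (fun x => (h x - g x)%R) < e%:E)%E ->
  `|E h - E g| <= e.
Proof.
move=> [_ g_appr] hg; apply/ler_addgt0Pr => d d0.
have [f Lf gf] := g_appr (d / 2) (divr_gt0 d0 (ltr0Sn _ 1)).
have hf : (C (fun x => (h x - f x)%R) < (e + d / 2)%R%:E)%E.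
  rewrite (_ : (fun x => _) = fun x => (h x - g x) + (g x - f x)); last first.
    by apply/funext => x; ring.
  exact: cap_extD_lt.
have /andP[? ?] := L1_ext_bounds Lf gf; have /andP[? ?] := L1_ext_bounds Lf hf.
by rewrite ler_norml; apply/andP; split; lra.
Qed.

Lemma L1_ext_map : L1_map L c E.
Proof.
move=> g h Lg Lh gh; apply: (@eq_dist_scaled_gt0P _ 1) => // e e0.
by rewrite mul1r; apply: L1_ext_lipschitz; rewrite // /C gh lte_fin.
Qed.

Lemma L1_ext_continuous : L1_continuous L c E.
Proof.
move=> g Lg e e0; exists (e / 2); first by rewrite divr_gt0.
move=> h Lh hg; apply: le_lt_trans (L1_ext_lipschitz Lg hg) _.
by rewrite ltr_pdivrMr // ltr_pMr // ltr1n.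
Qed.

Lemma L1_ext_unique psi : L1_continuous L c psi -> (forall X, L X -> psi X = r X) ->
  forall X, L1 L c X -> psi X = E X.
Proof.
move=> psi_cont psi_r X LX; apply: (@eq_dist_scaled_gt0P _ 2) => // e e0.
have [d d0 psi_d] := psi_cont X LX e e0.
have [f Lf Xf] : exists2 f, L f & (C (fun x => (X x - f x)%R) < (Num.min d e)%:E)%E.
  by apply: LX.2; rewrite lt_min d0.
have Xf_d : (C (fun x => (f x - X x)%R) < d%:E)%E.
  by rewrite cap_ext_sym; apply: lt_le_trans Xf _; rewrite lee_fin ge_min lexx.
have Xf_e : (C (fun x => (X x - f x)%R) < e%:E)%E.
  by apply: lt_le_trans Xf _; rewrite lee_fin ge_min lexx orbT.
have := psi_d f (L1_L Lf) Xf_d; rewrite psi_r // -(L1_extE Lf).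
have := L1_ext_lipschitz (L1_L Lf) Xf_e; rewrite !ler_norml ltr_norml.
by move=> /andP[? ?] /andP[? ?]; apply/andP; split; lra.
Qed.

Lemma L1_ext_near g d : L1 L c g -> 0 < d -> exists2 f, L f &
  (C (fun x => (g x - f x)%R) < d%:E)%E /\ r f - d <= E g <= r f + d.
Proof.
by move=> [_ g_appr] /g_appr[f Lf gf]; exists f => //; split; last exact: L1_ext_bounds.
Qed.

Hypothesis r_convex : convex_risk_measure L r.

Lemma L1_ext_transl X a : L1 L c X -> E (fun x => X x + a) = E X - a.
Proof.
move=> LX; apply: (@eq_dist_scaled_gt0P _ 2) => // d d0.
have [f Lf [Xf /andP[? ?]]] := L1_ext_near LX d0.
have Lfa : L (fun x => f x + a) by apply: (vlatD VL Lf).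
have /andP[] : r (fun x => f x + a) - d <= E (fun x => X x + a) <= r (fun x => f x + a) + d.
  apply: L1_ext_bounds => //.
  by rewrite (_ : (fun x => _) = fun x => (X x - f x)%R) //; apply/funext => x; ring.
by rewrite (crm_transl r_convex _ Lf) => ? ?; rewrite ler_norml; apply/andP; split; lra.
Qed.

Lemma L1_ext_convex X Y l : L1 L c X -> L1 L c Y -> 0 <= l <= 1 ->
  E (fun x => l * X x + (1 - l) * Y x) <= l * E X + (1 - l) * E Y.
Proof.
move=> LX LY /andP[l0 l1]; apply: (@ler_add_scaled_gt0P _ 3) => // d d0.
have [f Lf [Xf /andP[rfX _]]] := L1_ext_near LX d0.
have [k Lk [Yk /andP[rkY _]]] := L1_ext_near LY d0.
have LW : L (fun x => l * f x + (1 - l) * k x) by apply: (vlatD VL); apply: (vlatZ VL).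
have /andP[_] : r (fun x => l * f x + (1 - l) * k x) - (d + d) <=
    E (fun x => l * X x + (1 - l) * Y x) <= r (fun x => l * f x + (1 - l) * k x) + (d + d).
  apply: L1_ext_bounds => //.
  rewrite (_ : (fun x => _) =
    fun x => (l * (X x - f x) + (1 - l) * (Y x - k x))%R); last first.
    by apply/funext => x; ring.
  apply: cap_extD_lt; [apply: le_lt_trans _ Xf | apply: le_lt_trans _ Yk].
    by apply: (cap_ext_le L rho1) => x; rewrite normrM ler_piMl // ger0_norm.
  by apply: (cap_ext_le L rho1) => x; rewrite normrM ler_piMl // ger0_norm; lra.
have := crm_convex r_convex Lf Lk (introT andP (conj l0 l1)).
have l1' : 0 <= 1 - l by lra.
have : l * r f <= l * (E X + d) by rewrite ler_wpM2l //; lra.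
have : (1 - l) * r k <= (1 - l) * (E Y + d) by rewrite ler_wpM2l //; lra.
rewrite !mulrDr; nra.
Qed.

Lemma L1_ext_mono X Y : L1 L c X -> L1 L c Y -> L1_le L c X Y -> E Y <= E X.
Proof.
move=> LX LY [s [s_pos s_appr]]; apply: (@ler_add_scaled_gt0P _ 3) => // d d0.
have LYX := L1B LY LX.
have YX_refl : L1_equiv L c (fun x => Y x - X x) (fun x => Y x - X x).
  by rewrite /L1_equiv; under eq_fun do rewrite subrr; exact: (cap_ext0 VL SL L_continuous).
have [N /(_ N (leqnn N)) YXs] := s_appr _ LYX YX_refl d d0.
have [Ls s0] := s_pos N.
have [f Lf [Xf /andP[rfX _]]] := L1_ext_near LX d0.
have Lfs : L (fun x => f x + s N x) by apply: (vlatD VL).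
have LXs : L1 L c (fun x => X x + s N x) by apply: L1D => //; exact: L1_L.
have /andP[_ Xs_le] : r (fun x => f x + s N x) - d <= E (fun x => X x + s N x)
    <= r (fun x => f x + s N x) + d.
  apply: L1_ext_bounds => //.
  by rewrite (_ : (fun x => _) = fun x => (X x - f x)%R) //; apply/funext => x; ring.
have : `|E Y - E (fun x => X x + s N x)| <= d.
  apply: L1_ext_lipschitz => //.
  by rewrite (_ : (fun x => _) = fun x => (Y x - X x - s N x)%R) //; apply/funext => x; ring.
have : r (fun x => f x + s N x) <= r f by apply: (crm_mono r_convex) => // x; rewrite lerDl.
by rewrite ler_norml => ? /andP[? ?]; lra.
Qed.

Lemma L1_ext_convex_risk_measure : L1_convex_risk_measure L c E.
Proof.
split; first exact: L1_ext_map.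
split; first exact: L1_ext_mono.
by split; [exact: L1_ext_convex | exact: L1_ext_transl].
Qed.

End LipschitzExtension.

Lemma L1_ext_le r1 r2 :
  (forall X Y, L X -> L Y -> r1 X <= r1 Y + c (fun x => X x - Y x)) ->
  (forall X Y, L X -> L Y -> r2 X <= r2 Y + c (fun x => X x - Y x)) ->
  (forall X, L X -> r1 X <= r2 X) ->
  forall X, L1 L c X -> L1_ext L c r1 X <= L1_ext L c r2 X.
Proof.
move=> r1_lip r2_lip r12 X [_ X_appr]; apply: (@ler_add_scaled_gt0P _ 2) => // d d0.
have [f Lf Xf] := X_appr _ d0.
have /andP[_ ?] := L1_ext_bounds r1_lip Lf Xf; have /andP[? _] := L1_ext_bounds r2_lip Lf Xf.
by have := r12 _ Lf; lra.
Qed.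

Lemma L1_ext_homo X l : L1 L c X -> 0 <= l ->
  L1_ext L c rho1 (fun x => l * X x) = l * L1_ext L c rho1 X.
Proof.
move=> LX l0; have rho1_lip := dominated_crm_lipschitz VL SL SL.1 (fun _ _ => lexx _).
apply: (@eq_dist_scaled_gt0P _ (1 + l)) => [|d d0]; first by rewrite ltr_wpDr.
have [dl dl0 Zdl] := cap_extZ_small l d0.
have m0 : 0 < Num.min d dl by rewrite lt_min d0.
have [f Lf [Xf /andP[Xf_ge Xf_le]]] := L1_ext_near rho1_lip LX m0.
have /andP[lXf_ge lXf_le] : rho1 (fun x => l * f x) - d
    <= L1_ext L c rho1 (fun x => l * X x) <= rho1 (fun x => l * f x) + d.
  apply: (L1_ext_bounds rho1_lip (vlatZ VL l Lf)).
  rewrite (_ : (fun x => _) = fun x => (l * (X x - f x))%R); last by apply/funext => x; ring.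
  by apply: Zdl; apply: lt_le_trans Xf _; rewrite lee_fin ge_min lexx orbT.
rewrite (srm_homo SL Lf l0) in lXf_ge lXf_le.
have md : Num.min d dl <= d by rewrite ge_min lexx.
have := ler_wpM2l l0 Xf_ge; have := ler_wpM2l l0 Xf_le; have := ler_wpM2l l0 md.
rewrite !mulrDr ?mulrBr ler_norml => ? ? ?; apply/andP; split; lra.
Qed.

Lemma L1_ext_dominated r : convex_risk_measure L r -> (forall X, L X -> r X <= rho1 X) ->
  [/\ L1_convex_risk_measure L c (L1_ext L c r), L1_continuous L c (L1_ext L c r),
     forall X, L X -> L1_ext L c r X = r X &
     forall psi, L1_continuous L c psi -> (forall X, L X -> psi X = r X) ->
       forall X, L1 L c X -> psi X = L1_ext L c r X].
Proof.
move=> r_convex r_le; have r_lip := dominated_crm_lipschitz VL SL r_convex r_le.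
split; [exact: L1_ext_convex_risk_measure | exact: L1_ext_continuous |
        exact: L1_extE | exact: L1_ext_unique].
Qed.

End L1Extension.

Theorem lemma5p5 (R : realType) (T : topologicalType) (L : set (T -> R))
  (rho rho1 : (T -> R) -> R) :
  metrizable R T -> separable T ->
  (forall f, L f -> bounded_continuous f) ->
  vector_lattice L -> contains_constants L -> generates_topology L ->
  convex_risk_measure L rho -> normalized rho -> uniformly_regular L rho ->
  sublinear_risk_measure L rho1 -> regular L rho1 ->
  (forall X, L X -> rho X <= rho1 X) ->
  let c := fun X : T -> R => rho1 (fun x => - `|X x|) in
  (* (i) *)
  capacity L c /\
  (* (ii) *)
  exists rho1b : (T -> R) -> R,
    L1_sublinear_risk_measure L c rho1b /\ L1_continuous L c rho1b /\
    (forall X, L X -> rho1b X = rho1 X) /\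
    (forall psi : (T -> R) -> R, L1_continuous L c psi ->
       (forall X, L X -> psi X = rho1 X) ->
       forall X, L1 L c X -> psi X = rho1b X) /\
  (* (iii) *)
  exists rhob : (T -> R) -> R,
    L1_convex_risk_measure L c rhob /\ normalized rhob /\
    L1_continuous L c rhob /\
    (forall X, L X -> rhob X = rho X) /\
    (forall psi : (T -> R) -> R, L1_continuous L c psi ->
       (forall X, L X -> psi X = rho X) ->
       forall X, L1 L c X -> psi X = rhob X) /\
    (forall X, L1 L c X -> rhob X <= rho1b X).
Proof.
move=> MET SEP L_bc VL CL GT rho_crm rho0 _ SL RG rho_le c.
have L_continuous f : L f -> continuous f by move=> /L_bc[].
have ext := L1_ext_dominated VL CL GT L_continuous MET SEP SL RG.
have [rho1b_crm rho1b_cont rho1bE rho1b_uniq] := ext rho1 SL.1 (fun X _ => lexx _).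
have [rhob_crm rhob_cont rhobE rhob_uniq] := ext rho rho_crm rho_le.
split; first exact: risk_capacity_capacity.
exists (L1_ext L c rho1); split.
  by split=> // X l LX l0; apply: (L1_ext_homo VL CL GT L_continuous MET SEP SL RG).
do 3 split => //; exists (L1_ext L c rho); split => //; split.
  exact: etrans (rhobE _ (vlat0 VL)) rho0.
do 3 split => //.
apply: (L1_ext_le VL CL GT L_continuous MET SEP SL RG _ _ rho_le).
- exact (dominated_crm_lipschitz VL SL rho_crm rho_le).
- exact (dominated_crm_lipschitz VL SL SL.1 (fun X _ => lexx (rho1 X))).
Qed.
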